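(* Let $\nu>-1$. Then there exist constants $C,c>0$ such that $$|\delta\, p_t^\nu(x,y)|\le \frac{C}{t}\exp\Big(-\frac{|x-y|^2}{ct}\Big)\Big(1+\frac{\sqrt t}{y}\Big)^{\gamma_\nu}$$ for all $t>0$ and $x,y\in(0,\infty)$, where $\delta=\partial_x+x-\frac1x(\nu+\frac12)$ acts in the variable $x$.
   Context: For $\nu>-1$, $p_t^\nu(x,y)$ is the integral kernel of $e^{-t\mathcal L_\nu}$, where $\mathcal L_\nu$ is the one-dimensional Laguerre operator on $(0,\infty)$ (eigenfunctions the Laguerre functions $\varphi_k^\nu$, eigenvalues $4k+2\nu+2$); explicitly, with $r=e^{-4t}$, $p_t^\nu(x,y)=\frac{2(rxy)^{1/2}}{1-r}\exp\big(-\frac12\frac{1+r}{1-r}(x^2+y^2)\big)I_\nu\big(\frac{2r^{1/2}}{1-r}xy\big)$, $I_\nu$ the modified Bessel function of the first kind. $\gamma_\nu=-1/2-\nu$ if $-1<\nu<-1/2$ and $\gamma_\nu=0$ if $\nu\ge-1/2$. *)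

From Stdlib Require Import Reals.
From Coquelicot Require Import Coquelicot.
Open Scope R_scope.

Definition Gamma (s : R) : R :=
  RInt_gen (fun u => Rpower u (s - 1) * exp (- u)) (at_right 0) (Rbar_locally p_infty).

Definition BesselI (nu z : R) : R :=
  Series (fun k : nat =>
    Rpower (z / 2) (2 * INR k + nu) / (INR (Factorial.fact k) * Gamma (INR k + nu + 1))).

Definition lag_kernel (nu t x y : R) : R :=
  let r := exp (- (4 * t)) in
  2 * sqrt (r * x * y) / (1 - r)
    * exp (- (1 / 2) * ((1 + r) / (1 - r)) * (x ^ 2 + y ^ 2))
    * BesselI nu (2 * sqrt r / (1 - r) * x * y).

Definition gamma_nu (nu : R) : R :=
  if Rlt_dec nu (- (1 / 2)) then - (1 / 2) - nu else 0.

Definition delta_kernel (nu t x y : R) : R :=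
  Derive (fun x' => lag_kernel nu t x' y) x
  + x * lag_kernel nu t x y
  - (1 / x) * (nu + 1 / 2) * lag_kernel nu t x y.

(* Write [I_nu(z) = (z/2)^nu S_nu(z)] with [S_nu] an entire series with positive coefficients.
   After the substitution [s = e^(-2t)], [(x, y) = sqrt (1 - s^2) (u, v)], the quantity
   [|delta p_t(x, y)|] is [2 s^2 / (1 - s^2) <= e^(-t) / t] (up to constants) times the profile
   [2 s^(nu+1) u^(nu+3/2) v^(nu+1/2) e^(-(1+s^2)(u^2+v^2)/2) |v^2 S_(nu+1)(2suv) - S_nu(2suv)|].
   When [2suv <= 1] the Bessel factors are bounded and the Gaussian alone controls the profile.
   When [2suv >= 1] one uses [S_(nu+1)(z) <= M e^z z^(-nu-3/2)] and
   [|z/2 S_(nu+1)(z) - S_nu(z)| <= (nu + 2) S_(nu+1)(z)], and [e^z] is absorbed by the Gaussian,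
   leaving [e^(-(u-v)^2/8)]. Both Bessel estimates come from the Amos-type bound
   [I_(mu+1)(z) / I_mu(z) <= z / (z + mu + 1/2)], itself a consequence of the fact that
   [z^(2mu) (z S_mu^2 - z^3/4 S_(mu+1)^2 - (mu + 1/2) z S_mu S_(mu+1))] is increasing and tends
   to [0] at [0+]. *)

From Stdlib Require Import Reals Lra Psatz Classical.
From Coquelicot Require Import Coquelicot.
Open Scope R_scope.

(** * Real-analysis preliminaries *)

Lemma exp_le_compat a b : a <= b -> exp a <= exp b.
Proof. intros [H|H]; [apply Rlt_le, exp_increasing, H | subst; lra]. Qed.

Lemma ln_nonneg x : 1 <= x -> 0 <= ln x.
Proof. intros. rewrite <- ln_1. apply ln_le; lra. Qed.

Lemma ln_le_sub_1 x : 0 < x -> ln x <= x - 1.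
Proof. intros Hx. pose proof (exp_ineq1_le (ln x)). rewrite exp_ln in H; lra. Qed.

Lemma ln_le_2sqrt x : 0 < x -> ln x <= 2 * sqrt x.
Proof.
  intros Hx. assert (Hs : 0 < sqrt x) by (apply sqrt_lt_R0; lra).
  replace x with (sqrt x * sqrt x) at 1 by (apply sqrt_sqrt; lra).
  rewrite ln_mult by lra. pose proof (ln_le_sub_1 _ Hs). lra.
Qed.

Lemma continuity_pt_of_is_derive (f : R -> R) x l : is_derive f x l -> continuity_pt f x.
Proof.
  intros H. apply continuity_pt_filterlim.
  apply (ex_derive_continuous (V := R_NormedModule)). eexists; exact H.
Qed.

Lemma incr_of_derive_nonneg (f df : R -> R) a b : a <= b ->
  (forall x, a <= x <= b -> is_derive f x (df x)) ->
  (forall x, a <= x <= b -> 0 <= df x) -> f a <= f b.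
Proof.
  intros Hab Hd Hp.
  destruct (MVT_gen f a b df) as [c [Hc Heq]].
  - intros x Hx. rewrite Rmin_left, Rmax_right in Hx by lra. apply Hd; lra.
  - intros x Hx. rewrite Rmin_left, Rmax_right in Hx by lra.
    eapply continuity_pt_of_is_derive, Hd; lra.
  - rewrite Rmin_left, Rmax_right in Hc by lra. specialize (Hp c Hc). nra.
Qed.

Lemma decr_of_derive_nonpos (f df : R -> R) a b : a <= b ->
  (forall x, a <= x <= b -> is_derive f x (df x)) ->
  (forall x, a <= x <= b -> df x <= 0) -> f b <= f a.
Proof.
  intros Hab Hd Hp.
  assert (- f a <= - f b); [|lra].
  apply (incr_of_derive_nonneg (fun x => - f x) (fun x => - df x)); auto.
  - intros x Hx. apply (is_derive_opp f). auto.
  - intros x Hx. specialize (Hp x Hx). lra.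
Qed.

Lemma incr_bounded_lim_pinfty (G : R -> R) (a B : R) :
  (forall u v, a <= u -> u <= v -> G u <= G v) ->
  (forall u, a <= u -> G u <= B) ->
  exists l, filterlim G (Rbar_locally p_infty) (locally l) /\ forall u, a <= u -> G u <= l.
Proof.
  intros Hm Hb.
  set (E := fun y => exists u, a <= u /\ y = G u).
  assert (HE : bound E) by (exists B; intros y [u [Hu ->]]; now apply Hb).
  assert (HE2 : exists y, E y) by (exists (G a); exists a; split; [lra|easy]).
  destruct (completeness E HE HE2) as [l [Hl1 Hl2]].
  exists l. split; [|intros u Hu; apply Hl1; exists u; split; [lra|easy]].
  apply filterlim_locally. intros eps.
  assert (exists u0, a <= u0 /\ l - eps < G u0) as [u0 [Hu0 Hg]].
  { apply Classical_Pred_Type.not_all_not_ex. intros Hn.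
    assert (l <= l - eps); [|pose proof (cond_pos eps); lra].
    apply Hl2. intros y [u [Hu ->]].
    specialize (Hn u). apply Rnot_lt_le. intros Hc. apply Hn. split; auto. }
  exists u0. intros x Hx.
  assert (G x <= l) by (apply Hl1; exists x; split; [lra|easy]).
  assert (G u0 <= G x) by (apply Hm; lra).
  change (Rabs (G x - l) < eps). apply Rabs_lt_between'. lra.
Qed.

Lemma incr_bounded_lim_right_0 (G : R -> R) (b B : R) : 0 < b ->
  (forall u v, 0 < u -> u <= v -> v <= b -> G u <= G v) ->
  (forall u, 0 < u -> u <= b -> B <= G u) ->
  exists l, filterlim G (at_right 0) (locally l) /\ forall u, 0 < u -> u <= b -> l <= G u.
Proof.
  intros Hb0 Hm Hb.
  set (E := fun y => exists u, 0 < u /\ u <= b /\ y = - G u).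
  assert (HE : bound E).
  { exists (- B). intros y [u [Hu [Hu' ->]]]. specialize (Hb u Hu Hu'). lra. }
  assert (HE2 : exists y, E y) by (exists (- G b); exists b; split; [lra|split;[lra|easy]]).
  destruct (completeness E HE HE2) as [m [Hl1 Hl2]].
  exists (- m). split.
  2: { intros u Hu Hu'.
       assert (- G u <= m) by (apply Hl1; exists u; split; [lra|split;[lra|easy]]). lra. }
  apply filterlim_locally. intros eps.
  assert (exists u0, 0 < u0 /\ u0 <= b /\ m - eps < - G u0) as [u0 [Hu0 [Hu0' Hg]]].
  { apply Classical_Pred_Type.not_all_not_ex. intros Hn.
    assert (m <= m - eps); [|pose proof (cond_pos eps); lra].
    apply Hl2. intros y [u [Hu [Hu' ->]]].
    specialize (Hn u). apply Rnot_lt_le. intros Hc. apply Hn. split; auto. }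
  exists (mkposreal u0 Hu0). intros x Hx Hx0. simpl in Hx.
  change (Rabs (x - 0) < u0) in Hx. rewrite Rminus_0_r in Hx.
  apply Rabs_lt_between in Hx.
  assert (- G x <= m) by (apply Hl1; exists x; split; [lra|split;[lra|easy]]).
  assert (G x <= G u0) by (apply Hm; lra).
  change (Rabs (G x - - m) < eps). apply Rabs_lt_between'. lra.
Qed.

Lemma is_RInt_gen_0_pinfty_derive (h dh : R -> R) la lb :
  (forall x, 0 < x -> is_derive h x (dh x)) ->
  (forall x, 0 < x -> continuous dh x) ->
  filterlim h (at_right 0) (locally la) ->
  filterlim h (Rbar_locally p_infty) (locally lb) ->
  is_RInt_gen dh (at_right 0) (Rbar_locally p_infty) (lb - la).
Proof.
  intros Hd Hc Ha Hb.
  assert (HD : forall x, 0 < x -> Derive h x = dh x) by (intros; apply is_derive_unique; auto).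
  assert (Hpos : filter_prod (at_right 0) (Rbar_locally p_infty)
     (fun ab => forall x, Rmin (fst ab) (snd ab) <= x -> 0 < x)).
  { apply (Filter_prod _ _ _ (fun a => 0 < a) (fun b => 0 < b)).
    - exists (mkposreal 1 Rlt_0_1). intros y _ Hy. exact Hy.
    - exists 0. intros x Hx; exact Hx.
    - intros a b Ha' Hb' x Hx. unfold Rmin in Hx; destruct Rle_dec; simpl in *; lra. }
  apply (is_RInt_gen_ext (Derive h)).
  - eapply filter_imp; [|apply Hpos]. intros [a b] Hab x Hx. simpl in *.
    apply HD, Hab, Rlt_le, Hx.
  - apply is_RInt_gen_Derive; auto.
    + eapply filter_imp; [|apply Hpos]. intros [a b] Hab x Hx. simpl in *.
      eexists; apply Hd, Hab, Hx.
    + eapply filter_imp; [|apply Hpos]. intros [a b] Hab x Hx. simpl in *.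
      assert (Hx0 : 0 < x) by (apply Hab, Hx).
      apply (continuous_ext_loc (Derive h) dh).
      * exists (mkposreal x Hx0). intros y Hy. change (Rabs (y - x) < x) in Hy.
        apply Rabs_lt_between in Hy. symmetry. apply HD. lra.
      * apply Hc, Hx0.
Qed.

(** * The Gamma function *)

Definition gamma_integrand (s u : R) := Rpower u (s - 1) * exp (- u).

Lemma gamma_integrand_continuous s u : 0 < u -> continuous (gamma_integrand s) u.
Proof.
  intros Hu. apply (ex_derive_continuous (V := R_NormedModule)).
  unfold gamma_integrand, Rpower. auto_derive. lra.
Qed.

Lemma gamma_integrand_pos s u : 0 < u -> 0 < gamma_integrand s u.
Proof. intros. unfold gamma_integrand, Rpower. apply Rmult_lt_0_compat; apply exp_pos. Qed.

Lemma ex_RInt_gamma_integrand s a b : 0 < a -> 0 < b -> ex_RInt (gamma_integrand s) a b.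
Proof.
  intros Ha Hb. apply (ex_RInt_continuous (V := R_CompleteNormedModule)).
  intros z [Hz _]. apply gamma_integrand_continuous.
  eapply Rlt_le_trans; [|apply Hz]. unfold Rmin; destruct Rle_dec; lra.
Qed.

Lemma gamma_integrand_le s x : 1 <= x ->
  gamma_integrand s x <= exp (2 * (s - 1) ^ 2) * exp (- x / 2).
Proof.
  intros Hx. unfold gamma_integrand, Rpower. rewrite <- !exp_plus. apply exp_le_compat.
  pose proof (ln_le_2sqrt x ltac:(lra)).
  assert (Hs : sqrt x * sqrt x = x) by (apply sqrt_sqrt; lra).
  pose proof (sqrt_pos x). pose proof (ln_nonneg x Hx).
  assert ((s - 1) * ln x <= Rabs (s - 1) * (2 * sqrt x)).
  { apply Rle_trans with (Rabs (s - 1) * ln x).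
    - apply Rmult_le_compat_r; [lra|apply Rle_abs].
    - apply Rmult_le_compat_l; [apply Rabs_pos|lra]. }
  rewrite <- pow2_abs in *.
  pose proof (pow2_ge_0 (sqrt x - 2 * Rabs (s - 1))). nra.
Qed.

Definition Gamma_partial s u := RInt (gamma_integrand s) 1 u.

Lemma is_derive_Gamma_partial s u : 0 < u ->
  is_derive (Gamma_partial s) u (gamma_integrand s u).
Proof.
  intros Hu.
  apply (is_derive_RInt (V := R_CompleteNormedModule) (gamma_integrand s) (Gamma_partial s) 1 u).
  - exists (mkposreal u Hu). intros v Hv. apply RInt_correct, ex_RInt_gamma_integrand; [lra|].
    change (Rabs (v - u) < u) in Hv. apply Rabs_lt_between in Hv. lra.
  - now apply gamma_integrand_continuous.
Qed.

Lemma Gamma_partial_incr s u v : 0 < u -> u <= v -> Gamma_partial s u <= Gamma_partial s v.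
Proof.
  intros Hu Huv. unfold Gamma_partial.
  rewrite <- (RInt_Chasles (gamma_integrand s) 1 u v) by (apply ex_RInt_gamma_integrand; lra).
  assert (0 <= RInt (gamma_integrand s) u v); [|simpl; unfold plus; simpl; lra].
  apply RInt_ge_0; auto. apply ex_RInt_gamma_integrand; lra.
  intros x Hx. apply Rlt_le, gamma_integrand_pos; lra.
Qed.

Lemma Gamma_partial_le s u : 1 <= u -> Gamma_partial s u <= 2 * exp (2 * (s - 1) ^ 2).
Proof.
  intros Hu. set (K := exp (2 * (s - 1) ^ 2)).
  assert (HK : 0 < K) by apply exp_pos.
  set (F := fun x => - 2 * K * exp (- x / 2)).
  assert (Hi : is_RInt (fun x => K * exp (- x / 2)) 1 u (minus (F u) (F 1))).
  { apply (is_RInt_derive (V := R_CompleteNormedModule)).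
    - intros x _. unfold F. auto_derive. auto. unfold Rdiv. field.
    - intros x _. apply (ex_derive_continuous (V := R_NormedModule)). auto_derive. auto. }
  unfold Gamma_partial. apply Rle_trans with (RInt (fun x => K * exp (- x / 2)) 1 u).
  - apply RInt_le; auto. apply ex_RInt_gamma_integrand; lra. eexists; apply Hi.
    intros x Hx. apply gamma_integrand_le; lra.
  - rewrite (is_RInt_unique _ _ _ _ Hi). unfold F, minus, plus, opp; simpl.
    pose proof (exp_pos (- u / 2)).
    assert (exp (- (1) / 2) <= 1) by (rewrite <- exp_0 at 2; apply exp_le_compat; lra).
    assert (0 < K * exp (- u / 2)) by (apply Rmult_lt_0_compat; lra).
    assert (K * exp (- (1) / 2) <= K) by (rewrite <- (Rmult_1_r K) at 2; apply Rmult_le_compat_l; lra).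
    lra.
Qed.

Lemma Gamma_partial_ge s u : 0 < s -> 0 < u -> u <= 1 -> - / s <= Gamma_partial s u.
Proof.
  intros Hs Hu Hu1. unfold Gamma_partial.
  set (F := fun x => exp (s * ln x) / s).
  assert (Hi : is_RInt (fun x => exp ((s - 1) * ln x)) u 1 (minus (F 1) (F u))).
  { apply (is_RInt_derive (V := R_CompleteNormedModule)).
    - intros x Hx. rewrite Rmin_left in Hx by lra. unfold F. auto_derive. lra.
      replace ((s - 1) * ln x) with (s * ln x + - ln x) by ring.
      rewrite exp_plus, exp_Ropp, exp_ln by lra. field. lra.
    - intros x Hx. rewrite Rmin_left in Hx by lra.
      apply (ex_derive_continuous (V := R_NormedModule)). auto_derive. lra. }
  rewrite <- (opp_RInt_swap (V := R_CompleteNormedModule)) by (apply ex_RInt_gamma_integrand; lra).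
  assert (RInt (gamma_integrand s) u 1 <= RInt (fun x => exp ((s - 1) * ln x)) u 1).
  { apply RInt_le; auto. apply ex_RInt_gamma_integrand; lra. eexists; apply Hi.
    intros x Hx. unfold gamma_integrand, Rpower. rewrite <- (Rmult_1_r (exp _)) at 2.
    apply Rmult_le_compat_l. apply Rlt_le, exp_pos. rewrite <- exp_0; apply exp_le_compat; lra. }
  rewrite (is_RInt_unique _ _ _ _ Hi) in H. unfold F, minus, plus, opp in H; simpl in H.
  rewrite ln_1, Rmult_0_r, exp_0 in H.
  assert (0 <= exp (s * ln u) / s) by (apply Rdiv_le_0_compat; [apply Rlt_le, exp_pos | lra]).
  unfold opp; simpl. assert (/ s = 1 / s) by (field; lra). lra.
Qed.

Lemma Gamma_integral s : 0 < s ->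
  exists l, is_RInt_gen (gamma_integrand s) (at_right 0) (Rbar_locally p_infty) l /\ 0 < l.
Proof.
  intros Hs.
  destruct (incr_bounded_lim_pinfty (Gamma_partial s) 1 (2 * exp (2 * (s - 1) ^ 2)))
    as [lb [Hlb Hlb']].
  { intros u v Hu Huv. apply Gamma_partial_incr; lra. }
  { apply Gamma_partial_le. }
  destruct (incr_bounded_lim_right_0 (Gamma_partial s) 1 (- / s)) as [la [Hla Hla']].
  { lra. }
  { intros u v Hu Huv _. apply Gamma_partial_incr; lra. }
  { intros u Hu Hu1. apply Gamma_partial_ge; auto. }
  exists (lb - la). split.
  - apply (is_RInt_gen_0_pinfty_derive (Gamma_partial s)); auto.
    + apply is_derive_Gamma_partial.
    + apply gamma_integrand_continuous.
  - assert (la <= Gamma_partial s 1) by (apply Hla'; lra).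
    assert (Gamma_partial s 2 <= lb) by (apply Hlb'; lra).
    assert (Gamma_partial s 1 = 0) by apply (RInt_point (V := R_CompleteNormedModule)).
    assert (0 < Gamma_partial s 2); [|lra].
    apply RInt_gt_0; [lra| |]; intros x Hx.
    + apply gamma_integrand_pos; lra.
    + apply gamma_integrand_continuous; lra.
Qed.

Lemma Gamma_eq s l :
  is_RInt_gen (gamma_integrand s) (at_right 0) (Rbar_locally p_infty) l -> Gamma s = l.
Proof. apply (is_RInt_gen_unique (V := R_CompleteNormedModule)). Qed.

Lemma Gamma_pos s : 0 < s -> 0 < Gamma s.
Proof.
  intros Hs. destruct (Gamma_integral s Hs) as [l [H1 H2]]. now rewrite (Gamma_eq _ _ H1).
Qed.

Lemma lim_powr_exp_right_0 s : 0 < s ->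
  filterlim (fun u => exp (s * ln u) * exp (- u)) (at_right 0) (locally 0).
Proof.
  intros Hs. apply filterlim_locally. intros eps.
  pose proof (cond_pos eps) as He.
  assert (Hd : 0 < exp (ln eps / s)) by apply exp_pos.
  exists (mkposreal _ Hd). intros u Hu Hu0. simpl in Hu.
  change (Rabs (u - 0) < exp (ln eps / s)) in Hu. rewrite Rminus_0_r, Rabs_right in Hu by lra.
  change (Rabs (exp (s * ln u) * exp (- u) - 0) < eps).
  rewrite Rminus_0_r, Rabs_mult, !Rabs_right by (apply Rle_ge, Rlt_le, exp_pos).
  assert (ln u < ln eps / s) by (rewrite <- (ln_exp (ln eps / s)); apply ln_increasing; lra).
  assert (s * ln u < ln eps).
  { apply (Rmult_lt_compat_l s) in H; auto. field_simplify in H; lra. }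
  assert (exp (s * ln u) < eps) by (rewrite <- (exp_ln eps) by lra; apply exp_increasing; lra).
  assert (exp (- u) <= 1) by (rewrite <- exp_0; apply exp_le_compat; lra).
  pose proof (exp_pos (s * ln u)). pose proof (exp_pos (- u)). nra.
Qed.

Lemma lim_powr_exp_pinfty s : 0 < s ->
  filterlim (fun u => exp (s * ln u) * exp (- u)) (Rbar_locally p_infty) (locally 0).
Proof.
  intros Hs. apply filterlim_locally. intros eps.
  pose proof (cond_pos eps) as He.
  exists (Rmax 1 (2 * (2 * s ^ 2 - ln eps))). intros u Hu.
  assert (Hu1 : 1 < u) by (eapply Rle_lt_trans; [apply Rmax_l|exact Hu]).
  assert (Hu2 : 2 * (2 * s ^ 2 - ln eps) < u) by (eapply Rle_lt_trans; [apply Rmax_r|exact Hu]).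
  change (Rabs (exp (s * ln u) * exp (- u) - 0) < eps).
  rewrite Rminus_0_r, Rabs_mult, !Rabs_right by (apply Rle_ge, Rlt_le, exp_pos).
  rewrite <- exp_plus, <- (exp_ln eps) by lra. apply exp_increasing.
  pose proof (ln_le_2sqrt u ltac:(lra)).
  assert (Hsq : sqrt u * sqrt u = u) by (apply sqrt_sqrt; lra).
  pose proof (sqrt_pos u).
  assert (s * ln u <= s * (2 * sqrt u)) by (apply Rmult_le_compat_l; lra).
  pose proof (pow2_ge_0 (sqrt u - 2 * s)). nra.
Qed.

(* Integration by parts, with boundary term [- u^s e^(-u)]. *)
Lemma Gamma_succ s : 0 < s -> Gamma (s + 1) = s * Gamma s.
Proof.
  intros Hs. destruct (Gamma_integral s Hs) as [l [Hl _]].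
  rewrite (Gamma_eq _ _ Hl).
  set (h := fun u => - (exp (s * ln u) * exp (- u))).
  set (dh := fun u => gamma_integrand (s + 1) u - s * gamma_integrand s u).
  assert (Hopp : filterlim Ropp (locally 0) (locally 0)).
  { generalize (filterlim_opp 0). unfold opp; simpl. now rewrite Ropp_0. }
  assert (Hd : is_RInt_gen dh (at_right 0) (Rbar_locally p_infty) (0 - 0)).
  { apply (is_RInt_gen_0_pinfty_derive h dh).
    - intros x Hx. unfold h, dh, gamma_integrand, Rpower. auto_derive. lra.
      replace (s + 1 - 1) with s by ring.
      replace ((s - 1) * ln x) with (s * ln x + - ln x) by ring.
      rewrite exp_plus, (exp_Ropp (ln x)), exp_ln by lra. field. lra.
    - intros x Hx. unfold dh, gamma_integrand, Rpower.
      apply (ex_derive_continuous (V := R_NormedModule)). auto_derive. lra.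
    - apply (filterlim_comp _ _ _ (fun u => exp (s * ln u) * exp (- u)) Ropp _ (locally 0));
        [apply lim_powr_exp_right_0, Hs | exact Hopp].
    - apply (filterlim_comp _ _ _ (fun u => exp (s * ln u) * exp (- u)) Ropp _ (locally 0));
        [apply lim_powr_exp_pinfty, Hs | exact Hopp]. }
  assert (Hsum := is_RInt_gen_plus _ _ _ _ (is_RInt_gen_scal _ s _ Hl) Hd).
  replace (s * l) with (plus (scal s l) (0 - 0)) by (unfold plus, scal; simpl; unfold mult; simpl; ring).
  apply Gamma_eq. eapply is_RInt_gen_ext; [|apply Hsum].
  apply filter_forall. intros [a b] x _. unfold dh, plus, scal; simpl. unfold mult; simpl. ring.
Qed.

(** * The series [S_mu] *)

Lemma PSeries_nonneg a x : (forall n, 0 <= a n) -> 0 <= x -> ex_pseries a x -> 0 <= PSeries a x.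
Proof.
  intros Ha Hx Hex. apply ex_pseries_R in Hex.
  unfold PSeries.
  assert (Series (fun n => 0 * (a n * x ^ n)) <= Series (fun n => a n * x ^ n)).
  { apply Series_le; auto. intros n. rewrite Rmult_0_l. split; [lra|].
    apply Rmult_le_pos; [apply Ha | apply pow_le, Hx]. }
  rewrite Series_scal_l, Rmult_0_l in H. exact H.
Qed.

Definition bessel_coef (mu : R) (k : nat) : R :=
  / (INR (Factorial.fact k) * Gamma (INR k + mu + 1)).

Lemma Gamma_shift_pos mu k : -1 < mu -> 0 < Gamma (INR k + mu + 1).
Proof. intros. apply Gamma_pos. pose proof (pos_INR k). lra. Qed.

Lemma bessel_coef_pos mu k : -1 < mu -> 0 < bessel_coef mu k.
Proof.
  intros. apply Rinv_0_lt_compat, Rmult_lt_0_compat.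
  - apply INR_fact_lt_0.
  - now apply Gamma_shift_pos.
Qed.

Lemma bessel_coef_succ mu k : -1 < mu ->
  bessel_coef mu (S k) = bessel_coef mu k / ((INR k + 1) * (INR k + mu + 1)).
Proof.
  intros H. unfold bessel_coef. rewrite S_INR.
  replace (INR k + 1 + mu + 1) with ((INR k + mu + 1) + 1) by ring.
  rewrite Gamma_succ by (pose proof (pos_INR k); lra).
  rewrite fact_simpl, mult_INR, S_INR.
  pose proof (INR_fact_lt_0 k). pose proof (Gamma_shift_pos mu k H). pose proof (pos_INR k).
  field. repeat split; lra.
Qed.

Lemma CV_radius_bessel_coef mu : -1 < mu -> CV_radius (bessel_coef mu) = p_infty.
Proof.
  intros H. apply CV_radius_infinite_DAlembert.
  - intros n. apply Rgt_not_eq, bessel_coef_pos, H.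
  - apply is_lim_seq_le_le with (u := fun _ => 0) (w := fun n => / (mu + 1) * / INR (S n)).
    + intros n. rewrite bessel_coef_succ by auto.
      pose proof (bessel_coef_pos mu n H). pose proof (pos_INR n).
      replace (bessel_coef mu n / ((INR n + 1) * (INR n + mu + 1)) / bessel_coef mu n)
        with (/ ((INR n + 1) * (INR n + mu + 1))) by (field; repeat split; lra).
      assert (0 < (INR n + 1) * (INR n + mu + 1)) by (apply Rmult_lt_0_compat; lra).
      rewrite Rabs_right by (apply Rle_ge, Rlt_le, Rinv_0_lt_compat; lra).
      split; [apply Rlt_le, Rinv_0_lt_compat; lra|].
      rewrite S_INR, <- Rinv_mult. apply Rinv_le_contravar; [apply Rmult_lt_0_compat; lra|].
      rewrite Rmult_comm. apply Rmult_le_compat_l; lra.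
    + apply is_lim_seq_const.
    + replace (Finite 0) with (Rbar_mult (/ (mu + 1)) 0) by (simpl; f_equal; ring).
      apply is_lim_seq_scal_l.
      replace (Finite 0) with (Rbar_inv p_infty) by reflexivity.
      apply is_lim_seq_inv; [|discriminate].
      apply (is_lim_seq_incr_1 INR). apply is_lim_seq_INR.
Qed.

(* The entire factor [S_mu] of [I_mu(z) = (z/2)^mu S_mu(z)]. *)
Definition bessel_series (mu z : R) : R := PSeries (bessel_coef mu) ((z / 2) ^ 2).

Lemma ex_pseries_bessel_coef mu q : -1 < mu -> ex_pseries (bessel_coef mu) q.
Proof. intros H. apply CV_radius_inside. rewrite CV_radius_bessel_coef by auto. simpl; auto. Qed.

Lemma BesselI_eq nu z : 0 < z -> BesselI nu z = Rpower (z / 2) nu * bessel_series nu z.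
Proof.
  intros Hz. unfold BesselI, bessel_series, PSeries. rewrite <- Series_scal_l.
  apply Series_ext. intros k. unfold bessel_coef.
  rewrite (Rplus_comm (2 * INR k) nu), Rpower_plus.
  replace (2 * INR k) with (INR (2 * k)) by (rewrite mult_INR; simpl; ring).
  rewrite Rpower_pow, pow_mult by lra. unfold Rdiv. ring.
Qed.

Lemma PS_derive_bessel_coef mu k : -1 < mu -> PS_derive (bessel_coef mu) k = bessel_coef (mu + 1) k.
Proof.
  intros H. unfold PS_derive, bessel_coef.
  rewrite fact_simpl, mult_INR.
  replace (INR (S k) + mu + 1) with (INR k + (mu + 1) + 1) by (rewrite S_INR; ring).
  pose proof (INR_fact_lt_0 k). pose proof (Gamma_shift_pos (mu + 1) k ltac:(lra)).
  pose proof (pos_INR k). rewrite S_INR. field. repeat split; lra.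
Qed.

Lemma is_derive_bessel_series mu z : -1 < mu ->
  is_derive (bessel_series mu) z (z / 2 * bessel_series (mu + 1) z).
Proof.
  intros H. unfold bessel_series.
  assert (Hd : is_derive (PSeries (bessel_coef mu)) ((z / 2) ^ 2)
                 (PSeries (bessel_coef (mu + 1)) ((z / 2) ^ 2))).
  { rewrite <- (PSeries_ext (PS_derive (bessel_coef mu))) by (intros; apply PS_derive_bessel_coef; auto).
    apply is_derive_PSeries. rewrite CV_radius_bessel_coef by auto. simpl; auto. }
  assert (Hq : is_derive (fun z => (z / 2) ^ 2) z (z / 2)) by (auto_derive; auto; field).
  exact (is_derive_comp _ _ _ _ _ Hd Hq).
Qed.

Lemma ex_derive_bessel_series mu z : -1 < mu -> ex_derive (bessel_series mu) z.
Proof. intros H. eexists. now apply is_derive_bessel_series. Qed.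

(* The recurrence [I_(mu-1) - I_(mu+1) = (2 mu / z) I_mu], in normalized form. *)
Lemma bessel_series_recurrence mu z : -1 < mu ->
  bessel_series mu z = (mu + 1) * bessel_series (mu + 1) z + (z / 2) ^ 2 * bessel_series (mu + 2) z.
Proof.
  intros H. unfold bessel_series. set (q := (z / 2) ^ 2).
  rewrite <- PSeries_scal, <- PSeries_incr_1, <- PSeries_plus.
  3: { apply ex_pseries_incr_1, ex_pseries_bessel_coef; lra. }
  2: { apply ex_pseries_scal; [apply Rmult_comm | apply ex_pseries_bessel_coef; lra]. }
  apply PSeries_ext. intros [|j]; unfold PS_plus, PS_scal, PS_incr_1; simpl;
    unfold plus, zero, scal; simpl; unfold mult; simpl.
  - unfold bessel_coef. simpl. replace (0 + (mu + 1) + 1) with ((0 + mu + 1) + 1) by ring.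
    rewrite (Gamma_succ (0 + mu + 1)) by lra.
    assert (0 < Gamma (0 + mu + 1)) by (apply Gamma_pos; lra).
    field. lra.
  - rewrite (bessel_coef_succ mu), (bessel_coef_succ (mu + 1)) by lra.
    unfold bessel_coef. replace (INR j + (mu + 2) + 1) with ((INR j + (mu + 1) + 1) + 1) by ring.
    pose proof (pos_INR j).
    rewrite (Gamma_succ (INR j + (mu + 1) + 1)) by lra.
    replace (INR j + (mu + 1) + 1) with ((INR j + mu + 1) + 1) by ring.
    rewrite (Gamma_succ (INR j + mu + 1)) by lra.
    pose proof (INR_fact_lt_0 j). pose proof (Gamma_shift_pos mu j H).
    field. repeat split; lra.
Qed.

Lemma bessel_series_ge mu z : -1 < mu -> bessel_coef mu 0 <= bessel_series mu z.
Proof.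
  intros H. unfold bessel_series. set (q := (z / 2) ^ 2).
  assert (Hq : 0 <= q) by apply pow2_ge_0.
  rewrite PSeries_decr_1 by (apply ex_pseries_bessel_coef; auto).
  assert (0 <= PSeries (PS_decr_1 (bessel_coef mu)) q); [|nra].
  apply PSeries_nonneg; auto.
  - intros n. apply Rlt_le, bessel_coef_pos, H.
  - apply ex_pseries_decr_1; [|apply ex_pseries_bessel_coef, H].
    destruct (Req_dec q 0) as [Hq0|Hq0]; [left; exact Hq0|].
    right. exists (/ q). unfold mult, one; simpl. field. exact Hq0.
Qed.

Lemma bessel_series_pos mu z : -1 < mu -> 0 < bessel_series mu z.
Proof. intros H. eapply Rlt_le_trans; [apply bessel_coef_pos, H | apply bessel_series_ge, H]. Qed.

Lemma bessel_series_incr mu a b : -1 < mu -> 0 <= a -> a <= b ->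
  bessel_series mu a <= bessel_series mu b.
Proof.
  intros H Ha Hab.
  apply (incr_of_derive_nonneg (bessel_series mu) (fun z => z / 2 * bessel_series (mu + 1) z)); auto.
  - intros x _. apply is_derive_bessel_series; auto.
  - intros x Hx. apply Rmult_le_pos; [lra | apply Rlt_le, bessel_series_pos; lra].
Qed.

(** * A ratio bound for modified Bessel functions *)

Lemma nonneg_of_incr_linear_lower (Q : R -> R) K z : 0 < K -> 0 < z ->
  (forall e, 0 < e -> e <= z -> Q e <= Q z) ->
  (forall e, 0 < e -> e <= 1 -> - K * e <= Q e) -> 0 <= Q z.
Proof.
  intros HK Hz Hmon Hlow.
  destruct (Rle_lt_dec 0 (Q z)) as [H|H]; auto.
  set (e := Rmin (Rmin 1 z) (- Q z / (2 * K))).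
  assert (He : 0 < e) by (repeat apply Rmin_pos; try lra; apply Rdiv_lt_0_compat; lra).
  assert (He1 : e <= 1) by (eapply Rle_trans; [apply Rmin_l|apply Rmin_l]).
  assert (Hez : e <= z) by (eapply Rle_trans; [apply Rmin_l|apply Rmin_r]).
  assert (He2 : K * e <= K * (- Q z / (2 * K))) by (apply Rmult_le_compat_l; [lra|apply Rmin_r]).
  replace (K * (- Q z / (2 * K))) with (- Q z / 2) in He2 by (field; lra).
  specialize (Hlow e He He1). specialize (Hmon e He Hez). lra.
Qed.

Definition bessel_defect mu z :=
  z * bessel_series mu z ^ 2 - z ^ 3 / 4 * bessel_series (mu + 1) z ^ 2
  - (mu + 1 / 2) * z * bessel_series mu z * bessel_series (mu + 1) z.

Lemma is_derive_weighted_bessel_defect mu z : 0 < mu -> 0 < z ->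
  is_derive (fun z => exp (2 * mu * ln z) * bessel_defect mu z) z
    ((mu + 1 / 2) * exp (2 * mu * ln z) * bessel_series mu z * bessel_series (mu + 1) z).
Proof.
  intros Hm Hz. unfold bessel_defect.
  assert (HA := is_derive_bessel_series mu z ltac:(lra)).
  assert (HB := is_derive_bessel_series (mu + 1) z ltac:(lra)).
  assert (Hr := bessel_series_recurrence mu z ltac:(lra)).
  replace (mu + 1 + 1) with (mu + 2) in HB by ring.
  assert (HC : bessel_series (mu + 2) z
               = (bessel_series mu z - (mu + 1) * bessel_series (mu + 1) z) / (z / 2) ^ 2)
    by (rewrite Hr; field; lra).
  rewrite HC in HB.
  auto_derive.
  - repeat split; try apply ex_derive_bessel_series; lra.
  - replace (Derive (fun x => bessel_series mu x) z) with (z / 2 * bessel_series (mu + 1) z)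
      by (symmetry; apply is_derive_unique, HA).
    replace (Derive (fun x => bessel_series (mu + 1) x) z)
      with (z / 2 * ((bessel_series mu z - (mu + 1) * bessel_series (mu + 1) z) / (z / 2) ^ 2))
      by (symmetry; apply is_derive_unique, HB).
    field. lra.
Qed.

Lemma weighted_bessel_defect_ge mu : 0 < mu -> exists K, 0 < K /\
  forall e, 0 < e -> e <= 1 -> - K * e <= exp (2 * mu * ln e) * bessel_defect mu e.
Proof.
  intros Hm.
  set (A1 := bessel_series mu 1). set (B1 := bessel_series (mu + 1) 1).
  assert (HA1 : 0 < A1) by (apply bessel_series_pos; lra).
  assert (HB1 : 0 < B1) by (apply bessel_series_pos; lra).
  exists (B1 ^ 2 / 4 + (mu + 1 / 2) * A1 * B1). split.
  { assert (0 < (mu + 1 / 2) * A1 * B1) by (repeat apply Rmult_lt_0_compat; lra).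
    assert (0 < B1 ^ 2) by (apply pow_lt; lra). lra. }
  intros e He He1. unfold bessel_defect.
  assert (HA : 0 < bessel_series mu e <= A1)
    by (split; [apply bessel_series_pos; lra | apply bessel_series_incr; lra]).
  assert (HB : 0 < bessel_series (mu + 1) e <= B1)
    by (split; [apply bessel_series_pos; lra | apply bessel_series_incr; lra]).
  assert (Hex : 0 < exp (2 * mu * ln e) <= 1).
  { split; [apply exp_pos|]. rewrite <- exp_0. apply exp_le_compat.
    assert (ln e <= 0) by (rewrite <- ln_1; apply ln_le; lra). nra. }
  set (A := bessel_series mu e) in *. set (B := bessel_series (mu + 1) e) in *.
  set (E := exp (2 * mu * ln e)) in *.
  assert (H1 : e ^ 3 / 4 * B ^ 2 <= e * (B1 ^ 2 / 4)).
  { assert (e ^ 3 <= e) by (simpl; rewrite Rmult_1_r; nra).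
    assert (B ^ 2 <= B1 ^ 2) by (apply pow_incr; lra).
    assert (e ^ 3 * B ^ 2 <= e * B1 ^ 2)
      by (apply Rmult_le_compat; try apply pow_le; lra).
    lra. }
  assert (H2 : (mu + 1 / 2) * e * A * B <= e * ((mu + 1 / 2) * A1 * B1)).
  { assert (A * B <= A1 * B1) by (apply Rmult_le_compat; lra).
    assert (0 <= (mu + 1 / 2) * e) by (apply Rmult_le_pos; lra). nra. }
  set (P := e * A ^ 2 - e ^ 3 / 4 * B ^ 2 - (mu + 1 / 2) * e * A * B).
  assert (HP : - (B1 ^ 2 / 4 + (mu + 1 / 2) * A1 * B1) * e <= P).
  { unfold P. assert (0 <= e * A ^ 2) by nra. nra. }
  destruct (Rle_lt_dec 0 P).
  - assert (0 <= E * P) by (apply Rmult_le_pos; lra).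
    assert (0 <= (B1 ^ 2 / 4 + (mu + 1 / 2) * A1 * B1) * e); [|lra].
    apply Rmult_le_pos; [|lra]. assert (0 <= (mu + 1 / 2) * A1 * B1) by (repeat apply Rmult_le_pos; lra).
    pose proof (pow2_ge_0 B1). lra.
  - assert (P <= E * P) by nra. lra.
Qed.

Lemma bessel_defect_nonneg mu z : 0 < mu -> 0 < z -> 0 <= bessel_defect mu z.
Proof.
  intros Hm Hz.
  destruct (weighted_bessel_defect_ge mu Hm) as [K [HK Hlow]].
  set (Q := fun z => exp (2 * mu * ln z) * bessel_defect mu z).
  assert (HQ : 0 <= Q z).
  { apply (nonneg_of_incr_linear_lower Q K); auto.
    intros e He Hez.
    apply (incr_of_derive_nonneg Q
      (fun z => (mu + 1 / 2) * exp (2 * mu * ln z) * bessel_series mu z * bessel_series (mu + 1) z));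
      auto.
    - intros x Hx. apply is_derive_weighted_bessel_defect; lra.
    - intros x Hx.
      assert (0 < bessel_series mu x) by (apply bessel_series_pos; lra).
      assert (0 < bessel_series (mu + 1) x) by (apply bessel_series_pos; lra).
      pose proof (exp_pos (2 * mu * ln x)). apply Rlt_le. repeat apply Rmult_lt_0_compat; lra. }
  unfold Q in HQ. pose proof (exp_pos (2 * mu * ln z)). nra.
Qed.

(* Amos-type bound [I_(mu+1)(z) / I_mu(z) <= z / (z + mu + 1/2)]. *)
Lemma bessel_series_ratio_le mu z : 0 < mu -> 0 < z ->
  (z + mu + 1 / 2) * (z / 2 * bessel_series (mu + 1) z) <= z * bessel_series mu z.
Proof.
  intros Hm Hz. pose proof (bessel_defect_nonneg mu z Hm Hz) as HP. unfold bessel_defect in HP.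
  assert (HA : 0 < bessel_series mu z) by (apply bessel_series_pos; lra).
  assert (HB : 0 < bessel_series (mu + 1) z) by (apply bessel_series_pos; lra).
  set (A := bessel_series mu z) in *. set (B := bessel_series (mu + 1) z) in *.
  set (X := z / 2 * B).
  assert (HX : 0 < X) by (unfold X; nra).
  assert (H1 : z * (A ^ 2 - X ^ 2) >= 2 * (mu + 1 / 2) * A * X).
  { unfold X. apply Rle_ge.
    replace (z * (A ^ 2 - (z / 2 * B) ^ 2)) with (z * A ^ 2 - z ^ 3 / 4 * B ^ 2) by field.
    replace (2 * (mu + 1 / 2) * A * (z / 2 * B)) with ((mu + 1 / 2) * z * A * B) by field. lra. }
  assert (H2 : X <= A).
  { destruct (Rle_lt_dec X A); auto.
    assert (0 < (X - A) * (A + X)) by (apply Rmult_lt_0_compat; lra).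
    assert (0 < z * (X ^ 2 - A ^ 2)) by (apply Rmult_lt_0_compat; lra).
    assert (0 < 2 * (mu + 1 / 2) * A * X) by (repeat apply Rmult_lt_0_compat; lra). lra. }
  fold X. destruct (Rle_lt_dec ((z + mu + 1 / 2) * X) (z * A)); auto.
  assert (z * (A - X) < (mu + 1 / 2) * X) by lra.
  assert (z * (A - X) * (A + X) < (mu + 1 / 2) * X * (A + X)) by (apply Rmult_lt_compat_r; lra).
  assert ((mu + 1 / 2) * X * (X - A) <= 0) by (apply Rmult_le_0_l; [apply Rmult_le_pos|]; lra).
  lra.
Qed.

(* By the ratio bound, [e^(-z) (z + mu + 1/2)^(mu + 1/2) S_mu(z)] is nonincreasing. *)
Lemma bessel_series_le_exp mu : 0 < mu -> exists M, 0 < M /\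
  forall z, 1 <= z -> bessel_series mu z <= M * exp z * Rpower z (- (mu + 1 / 2)).
Proof.
  intros Hm. set (a := mu + 1 / 2).
  set (H := fun z => exp (- z + a * ln (z + a)) * bessel_series mu z).
  set (dH := fun z => exp (- z + a * ln (z + a))
      * ((-1 + a / (z + a)) * bessel_series mu z + z / 2 * bessel_series (mu + 1) z)).
  assert (Hd : forall z, 0 < z -> is_derive H z (dH z)).
  { intros z Hz. unfold H, dH. assert (HA := is_derive_bessel_series mu z ltac:(lra)).
    auto_derive.
    - repeat split; [unfold a; lra | apply ex_derive_bessel_series; lra].
    - replace (Derive (fun x => bessel_series mu x) z) with (z / 2 * bessel_series (mu + 1) z)
        by (symmetry; apply is_derive_unique, HA).
      field. unfold a; lra. }
  assert (HH1 : 0 < H 1) by (apply Rmult_lt_0_compat; [apply exp_pos | apply bessel_series_pos; lra]).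
  exists (H 1). split; auto.
  intros z Hz.
  assert (Hle : H z <= H 1).
  { apply (decr_of_derive_nonpos H dH 1 z Hz); [intros x Hx; apply Hd; lra|].
    intros x Hx. pose proof (exp_pos (- x + a * ln (x + a))).
    pose proof (bessel_series_ratio_le mu x Hm ltac:(lra)).
    assert (Hxa : 0 < x + a) by (unfold a; lra).
    assert (x / 2 * bessel_series (mu + 1) x <= x * bessel_series mu x / (x + a)).
    { apply (Rmult_le_reg_l (x + a)); auto.
      replace ((x + a) * (x * bessel_series mu x / (x + a))) with (x * bessel_series mu x)
        by (field; lra).
      unfold a. lra. }
    unfold dH. replace ((-1 + a / (x + a)) * bessel_series mu x)
      with (- (x * bessel_series mu x / (x + a))) by (field; lra).
    apply Rmult_le_0_l; lra. }
  unfold H in Hle.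
  assert (Hza : 0 < z + a) by (unfold a; lra).
  assert (Hbound : bessel_series mu z <= H 1 * exp (z - a * ln (z + a))).
  { apply (Rmult_le_reg_l (exp (- z + a * ln (z + a)))); [apply exp_pos|].
    replace (exp (- z + a * ln (z + a)) * (H 1 * exp (z - a * ln (z + a)))) with (H 1); auto.
    rewrite Rmult_comm, Rmult_assoc, <- exp_plus.
    replace (z - a * ln (z + a) + (- z + a * ln (z + a))) with 0 by ring.
    rewrite exp_0; ring. }
  assert (Hexp : exp (z - a * ln (z + a)) <= exp z * Rpower z (- a)).
  { unfold Rpower. rewrite <- exp_plus. apply exp_le_compat.
    assert (ln z <= ln (z + a)) by (apply ln_le; unfold a; lra).
    assert (a * ln z <= a * ln (z + a)) by (apply Rmult_le_compat_l; [unfold a; lra | assumption]).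
    lra. }
  eapply Rle_trans; [exact Hbound|]. rewrite Rmult_assoc. apply Rmult_le_compat_l; lra.
Qed.

Lemma bessel_series_shift_diff_le nu z : -1 < nu -> 0 < z ->
  Rabs (z / 2 * bessel_series (nu + 1) z - bessel_series nu z) <= (nu + 2) * bessel_series (nu + 1) z.
Proof.
  intros Hn Hz.
  assert (R1 := bessel_series_ratio_le (nu + 1) z ltac:(lra) Hz).
  assert (R2 := bessel_series_ratio_le (nu + 2) z ltac:(lra) Hz).
  assert (E1 := bessel_series_recurrence nu z Hn).
  assert (E2 := bessel_series_recurrence (nu + 1) z ltac:(lra)).
  replace (nu + 1 + 1) with (nu + 2) in R1, E2 by ring.
  replace (nu + 1 + 2) with (nu + 3) in E2 by ring.
  replace (nu + 2 + 1) with (nu + 3) in R2 by ring.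
  assert (P1 : 0 < bessel_series (nu + 1) z) by (apply bessel_series_pos; lra).
  assert (P2 : 0 < bessel_series (nu + 2) z) by (apply bessel_series_pos; lra).
  assert (P3 : 0 < bessel_series (nu + 3) z) by (apply bessel_series_pos; lra).
  set (w := z / 2) in *. set (S0 := bessel_series nu z) in *.
  set (S1 := bessel_series (nu + 1) z) in *. set (S2 := bessel_series (nu + 2) z) in *.
  set (S3 := bessel_series (nu + 3) z) in *.
  assert (Hw : 0 < w) by (unfold w; lra).
  assert (F1 : w * S2 <= S1).
  { assert (0 <= (nu + 1 + 1 / 2) * (w * S2)) by (apply Rmult_le_pos; [lra | apply Rmult_le_pos; lra]).
    apply (Rmult_le_reg_l z); lra. }
  assert (F2 : w * S3 <= S2).
  { assert (0 <= (nu + 2 + 1 / 2) * (w * S3)) by (apply Rmult_le_pos; [lra | apply Rmult_le_pos; lra]).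
    apply (Rmult_le_reg_l z); lra. }
  assert (F3 : w * S1 - w ^ 2 * S2 <= (nu + 2) * S1).
  { assert (S1 <= (nu + 2) * S2 + w * S2).
    { rewrite E2 at 1. replace (w ^ 2 * S3) with (w * (w * S3)) by ring.
      assert (w * (w * S3) <= w * S2) by (apply Rmult_le_compat_l; lra). lra. }
    assert (w * S1 <= w * ((nu + 2) * S2 + w * S2)) by (apply Rmult_le_compat_l; lra).
    assert (w * S2 * (nu + 2) <= S1 * (nu + 2)) by (apply Rmult_le_compat_r; lra).
    lra. }
  assert (F4 : w ^ 2 * S2 <= w * S1)
    by (replace (w ^ 2 * S2) with (w * (w * S2)) by ring; apply Rmult_le_compat_l; lra).
  assert (0 <= (nu + 1) * S1) by (apply Rmult_le_pos; lra).
  rewrite E1. apply Rabs_le. split; lra.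
Qed.

(** * The kernel in rescaled variables *)

(* [p_t(x, y) = 2 sqrt (r x y) / (1 - r) e^(-(1+r)(x^2+y^2) / (2(1-r))) (z/2)^nu S_nu(z)] with
   [z = k x y]; the terms [x p] and [- (nu + 1/2) p / x] of [delta p] cancel against the derivatives
   of [sqrt x] and [(z/2)^nu], the Gaussian and [S_nu] contributions are what remains. *)
Lemma delta_kernel_eq nu t x y : -1 < nu -> 0 < t -> 0 < x -> 0 < y ->
  let r := exp (- (4 * t)) in
  let k := 2 * sqrt r / (1 - r) in
  let z := k * x * y in
  delta_kernel nu t x y =
    2 * sqrt (r * x * y) / (1 - r) * exp (- (1 / 2) * ((1 + r) / (1 - r)) * (x ^ 2 + y ^ 2))
    * Rpower (z / 2) nu * x
    * ((1 - (1 + r) / (1 - r)) * bessel_series nu z + (k * y) ^ 2 / 2 * bessel_series (nu + 1) z).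
Proof.
  intros Hn Ht Hx Hy r k z.
  assert (Hr : 0 < r) by apply exp_pos.
  assert (Hr1 : r < 1) by (unfold r; rewrite <- exp_0; apply exp_increasing; lra).
  assert (Hk : 0 < k).
  { apply Rdiv_lt_0_compat; [apply Rmult_lt_0_compat; [lra | apply sqrt_lt_R0; lra] | lra]. }
  set (g := fun x' => 2 * sqrt (r * x' * y) / (1 - r)
     * exp (- (1 / 2) * ((1 + r) / (1 - r)) * (x' ^ 2 + y ^ 2))
     * exp (nu * ln (k * x' * y / 2)) * bessel_series nu (k * x' * y)).
  assert (Hkxy : forall x', 0 < x' -> 0 < k * x' * y)
    by (intros; apply Rmult_lt_0_compat; [apply Rmult_lt_0_compat|]; lra).
  assert (Heq : forall x', 0 < x' -> lag_kernel nu t x' y = g x').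
  { intros x' Hx'. unfold lag_kernel, g. fold r k. rewrite BesselI_eq.
    - unfold Rpower. ring.
    - now apply Hkxy. }
  set (D := 2 * sqrt (r * x * y) / (1 - r) * exp (- (1 / 2) * ((1 + r) / (1 - r)) * (x ^ 2 + y ^ 2))
     * exp (nu * ln (k * x * y / 2)) * x
     * ((1 - (1 + r) / (1 - r)) * bessel_series nu z + (k * y) ^ 2 / 2 * bessel_series (nu + 1) z)).
  assert (HS := is_derive_bessel_series nu (k * x * y) Hn).
  assert (Hrxy : 0 < r * x * y) by (repeat apply Rmult_lt_0_compat; lra).
  assert (Hg : is_derive g x (D + (1 / x) * (nu + 1 / 2) * g x - x * g x)).
  { unfold g, D, z. auto_derive.
    - repeat split; [exact Hrxy | apply Rmult_lt_0_compat; [apply Hkxy, Hx | lra] | eexists; exact HS].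
    - replace (Derive (fun x0 => bessel_series nu x0) (k * x * y))
        with (k * x * y / 2 * bessel_series (nu + 1) (k * x * y))
        by (symmetry; apply is_derive_unique, HS).
      replace (x * (x * 1) + y * (y * 1)) with (x ^ 2 + y ^ 2) by ring.
      replace (k * x * y * / 2) with (k * x * y / 2) by reflexivity.
      replace (r * 1 * y) with (sqrt (r * x * y) * sqrt (r * x * y) / x)
        by (rewrite sqrt_sqrt; [field | apply Rlt_le]; lra).
      assert (0 < sqrt (r * x * y)) by (apply sqrt_lt_R0; lra).
      field. repeat split; lra. }
  assert (HL : is_derive (fun x' => lag_kernel nu t x' y) x
                 (D + (1 / x) * (nu + 1 / 2) * g x - x * g x)).
  { apply (is_derive_ext_loc g); [|exact Hg]. exists (mkposreal x Hx). intros x' Hx'.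
    change (Rabs (x' - x) < x) in Hx'. apply Rabs_lt_between in Hx'. symmetry. apply Heq. lra. }
  unfold delta_kernel. erewrite (is_derive_unique (fun x' : R => lag_kernel nu t x' y) x _ HL).
  rewrite (Heq x Hx).
  unfold D, z, Rpower. ring.
Qed.

(* [delta_profile nu s u v = 2 s^(nu+1) u^(nu+3/2) v^(nu+1/2) e^(-(1+s^2)(u^2+v^2)/2)
   |v^2 S_(nu+1)(2suv) - S_nu(2suv)|]; the log-weight is the logarithm of the monomial factor. *)
Definition profile_log_weight nu s u v :=
  ln 2 + (nu + 1) * ln s + (nu + 3 / 2) * ln u + (nu + 1 / 2) * ln v.

Definition delta_profile nu s u v :=
  exp (profile_log_weight nu s u v) * exp (- ((1 + s ^ 2) / 2 * (u ^ 2 + v ^ 2)))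
  * Rabs (v ^ 2 * bessel_series (nu + 1) (2 * s * u * v) - bessel_series nu (2 * s * u * v)).

Lemma sqrt_exp a : 0 < a -> sqrt a = exp (ln a / 2).
Proof. intros Ha. rewrite <- Rpower_sqrt by auto. unfold Rpower. f_equal. field. Qed.

Lemma kernel_prefactor_eq nu s d u v : 0 < s -> 0 < d -> 0 < u -> 0 < v ->
  2 * sqrt (s ^ 2 * (sqrt d * u) * (sqrt d * v)) / d * Rpower (2 * s * u * v / 2) nu * (sqrt d * u)
  = exp (profile_log_weight nu s u v).
Proof.
  intros Hs Hd Hu Hv.
  assert (Hsd : 0 < sqrt d) by (apply sqrt_lt_R0; auto).
  assert (Hlsd : ln (sqrt d) = ln d / 2) by (rewrite sqrt_exp by lra; apply ln_exp).
  set (x := sqrt d * u). set (y := sqrt d * v).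
  assert (Hx : 0 < x) by (apply Rmult_lt_0_compat; lra).
  assert (Hy : 0 < y) by (apply Rmult_lt_0_compat; lra).
  assert (Hlx : ln x = ln d / 2 + ln u) by (unfold x; rewrite ln_mult, Hlsd by lra; ring).
  assert (Hly : ln y = ln d / 2 + ln v) by (unfold y; rewrite ln_mult, Hlsd by lra; ring).
  rewrite sqrt_exp by (repeat apply Rmult_lt_0_compat; try apply pow_lt; lra).
  replace (2 * s * u * v / 2) with (s * u * v) by field.
  unfold Rpower. rewrite !ln_mult by (repeat apply Rmult_lt_0_compat; try apply pow_lt; lra).
  replace (ln (s ^ 2)) with (2 * ln s) by (simpl; rewrite Rmult_1_r, ln_mult by lra; ring).
  transitivity (2 * exp ((2 * ln s + ln x + ln y) / 2 + - ln d + nu * (ln s + ln u + ln v) + ln x)).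
  { rewrite !exp_plus, exp_Ropp, (exp_ln d), (exp_ln x) by lra. field. lra. }
  replace ((2 * ln s + ln x + ln y) / 2 + - ln d + nu * (ln s + ln u + ln v) + ln x)
    with (profile_log_weight nu s u v + - ln 2)
    by (unfold profile_log_weight; rewrite Hlx, Hly; field).
  rewrite exp_plus, exp_Ropp, exp_ln by lra. field.
Qed.

Lemma delta_kernel_abs_eq nu t x y : -1 < nu -> 0 < t -> 0 < x -> 0 < y ->
  let s := exp (- (2 * t)) in
  Rabs (delta_kernel nu t x y)
  = 2 * s ^ 2 / (1 - s ^ 2) * delta_profile nu s (x / sqrt (1 - s ^ 2)) (y / sqrt (1 - s ^ 2)).
Proof.
  intros Hn Ht Hx Hy s.
  rewrite (delta_kernel_eq nu t x y Hn Ht Hx Hy). cbv zeta.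
  assert (Hs : 0 < s) by apply exp_pos.
  assert (Hs1 : s < 1) by (unfold s; rewrite <- exp_0; apply exp_increasing; lra).
  replace (exp (- (4 * t))) with (s ^ 2)
    by (unfold s; simpl; rewrite Rmult_1_r, <- exp_plus; f_equal; ring).
  rewrite sqrt_pow2 by lra.
  set (d := 1 - s ^ 2).
  assert (Hd : 0 < d) by (unfold d; assert (s ^ 2 < 1) by (simpl; nra); lra).
  assert (Hsd : 0 < sqrt d) by (apply sqrt_lt_R0; auto).
  assert (Hsd2 : sqrt d * sqrt d = d) by (apply sqrt_sqrt; lra).
  set (u := x / sqrt d). set (v := y / sqrt d).
  assert (Hu : 0 < u) by (apply Rdiv_lt_0_compat; auto).
  assert (Hv : 0 < v) by (apply Rdiv_lt_0_compat; auto).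
  assert (Hx' : x = sqrt d * u) by (unfold u; field; lra).
  assert (Hy' : y = sqrt d * v) by (unfold v; field; lra).
  clearbody u v. subst x y.
  assert (Hsq : forall a, (sqrt d * a) ^ 2 = d * a ^ 2)
    by (intros; transitivity ((sqrt d * sqrt d) * a ^ 2); [ring | rewrite Hsd2; ring]).
  replace (2 * s / d * (sqrt d * u) * (sqrt d * v)) with (2 * s * u * v)
    by (transitivity (2 * s / d * (sqrt d * sqrt d) * (u * v)); [rewrite Hsd2; field; lra | field; lra]).
  replace (- (1 / 2) * ((1 + s ^ 2) / d) * ((sqrt d * u) ^ 2 + (sqrt d * v) ^ 2))
    with (- ((1 + s ^ 2) / 2 * (u ^ 2 + v ^ 2))) by (rewrite !Hsq; field; lra).
  replace ((2 * s / d * (sqrt d * v)) ^ 2) with (4 * s ^ 2 / d * v ^ 2)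
    by (replace (4 * s ^ 2 / d * v ^ 2) with (4 * s ^ 2 / d ^ 2 * (d * v ^ 2)) by (field; lra);
        rewrite <- Hsq; field; lra).
  set (S0 := bessel_series nu (2 * s * u * v)). set (S1 := bessel_series (nu + 1) (2 * s * u * v)).
  replace ((1 - (1 + s ^ 2) / d) * S0 + 4 * s ^ 2 / d * v ^ 2 / 2 * S1)
    with (2 * s ^ 2 / d * (v ^ 2 * S1 - S0)) by (unfold d in *; field; lra).
  unfold delta_profile. fold S0 S1.
  rewrite <- (kernel_prefactor_eq nu s d u v) by lra.
  set (P := 2 * sqrt (s ^ 2 * (sqrt d * u) * (sqrt d * v)) / d * Rpower (2 * s * u * v / 2) nu
            * (sqrt d * u)).
  set (E := exp (- ((1 + s ^ 2) / 2 * (u ^ 2 + v ^ 2)))).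
  assert (HP : 0 < P) by (unfold P; rewrite kernel_prefactor_eq by lra; apply exp_pos).
  assert (HE : 0 < E) by apply exp_pos.
  assert (0 < 2 * s ^ 2 / d)
    by (apply Rdiv_lt_0_compat; [apply Rmult_lt_0_compat; [lra | apply pow_lt; lra] | lra]).
  replace (2 * sqrt (s ^ 2 * (sqrt d * u) * (sqrt d * v)) / d * E * Rpower (2 * s * u * v / 2) nu
           * (sqrt d * u) * (2 * s ^ 2 / d * (v ^ 2 * S1 - S0)))
    with (P * E * (2 * s ^ 2 / d * (v ^ 2 * S1 - S0))) by (unfold P; ring).
  rewrite !Rabs_mult, (Rabs_right P), (Rabs_right E), (Rabs_right (2 * s ^ 2 / d)) by lra. ring.
Qed.

(** * Estimates of the profile *)

Lemma mul_ln_sub_sq_le p a : 0 <= p -> 0 < a -> p * ln a - a ^ 2 / 8 <= 2 * p ^ 2.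
Proof.
  intros Hp Ha. pose proof (ln_le_sub_1 a Ha).
  assert (p * ln a <= p * a) by (apply Rmult_le_compat_l; lra).
  pose proof (pow2_ge_0 (a / 2 - 2 * p)). nra.
Qed.

Lemma mul_exp_neg_sq_le a : 0 <= a -> a * exp (- (a ^ 2 / 8)) <= 2.
Proof.
  intros Ha.
  assert (Hlin : a <= 2 * exp (a ^ 2 / 8)).
  { pose proof (exp_ineq1_le (a ^ 2 / 8)). pose proof (pow2_ge_0 (a / 2 - 1)). nra. }
  pose proof (exp_pos (- (a ^ 2 / 8))).
  assert (Hle : a * exp (- (a ^ 2 / 8)) <= 2 * exp (a ^ 2 / 8) * exp (- (a ^ 2 / 8)))
    by (apply Rmult_le_compat_r; lra).
  rewrite Rmult_assoc, <- exp_plus, Rplus_opp_r, exp_0 in Hle. lra.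
Qed.

Lemma mul_exp_neg_sq_le_exp a : 0 <= a -> a * exp (- (a ^ 2 / 4)) <= 2 * exp (- (a ^ 2 / 8)).
Proof.
  intros Ha. replace (- (a ^ 2 / 4)) with (- (a ^ 2 / 8) + - (a ^ 2 / 8)) by field.
  rewrite exp_plus, <- Rmult_assoc. apply Rmult_le_compat_r.
  - apply Rlt_le, exp_pos.
  - now apply mul_exp_neg_sq_le.
Qed.

Lemma ln_1_add_sq_le a : ln (1 + a ^ 2) <= a ^ 2 / 8 + ln 8.
Proof.
  pose proof (exp_ineq1_le (a ^ 2 / 8)). pose proof (pow2_ge_0 a).
  rewrite <- (ln_exp (a ^ 2 / 8)), <- ln_mult by (try apply exp_pos; lra).
  apply ln_le; nra.
Qed.

Lemma gamma_nu_nonneg nu : 0 <= gamma_nu nu.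
Proof. unfold gamma_nu. destruct Rlt_dec; lra. Qed.

Lemma gamma_nu_le_1 nu : -1 < nu -> gamma_nu nu <= 1.
Proof. intros. unfold gamma_nu. destruct Rlt_dec; lra. Qed.

(* For [nu < -1/2] the power [v^(nu+1/2)] blows up at [0]; this is what [gamma_nu] absorbs. *)
Lemma mul_ln_sub_sq_le_gamma_nu nu v : -1 < nu -> 0 < v ->
  (nu + 1 / 2) * ln v - v ^ 2 / 8 <= 2 * (nu + 1 / 2) ^ 2 + gamma_nu nu * ln (1 + / v).
Proof.
  intros Hn Hv. assert (Hiv : 0 < / v) by (apply Rinv_0_lt_compat; lra).
  assert (Hl : 0 <= ln (1 + / v)) by (apply ln_nonneg; lra).
  unfold gamma_nu. destruct Rlt_dec as [H|H].
  - assert (Hln : ln v = - ln (/ v)) by (rewrite ln_Rinv by lra; ring).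
    assert (ln (/ v) <= ln (1 + / v)) by (apply ln_le; lra).
    assert ((- (1 / 2) - nu) * ln (/ v) <= (- (1 / 2) - nu) * ln (1 + / v))
      by (apply Rmult_le_compat_l; lra).
    pose proof (pow2_ge_0 v). pose proof (pow2_ge_0 (nu + 1 / 2)). rewrite Hln. nra.
  - pose proof (mul_ln_sub_sq_le (nu + 1 / 2) v ltac:(lra) Hv). lra.
Qed.

Definition profile_majorant nu s u v :=
  exp (- ln s / 2 - (u - v) ^ 2 / 16 + gamma_nu nu * ln (1 + / v)).

Lemma delta_profile_le_small nu : -1 < nu -> exists K, 0 < K /\
  forall s u v, 0 < s -> s < 1 -> 0 < u -> 0 < v -> 2 * s * u * v <= 1 ->
    delta_profile nu s u v <= K * profile_majorant nu s u v.
Proof.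
  intros Hn. set (M := bessel_series (nu + 1) 1 + bessel_series nu 1).
  assert (HM : 0 < M).
  { pose proof (bessel_series_pos (nu + 1) 1 ltac:(lra)). pose proof (bessel_series_pos nu 1 Hn).
    unfold M; lra. }
  exists (M * exp (ln 2 + 2 * (nu + 3 / 2) ^ 2 + 2 * (nu + 1 / 2) ^ 2 + ln 8)).
  split; [apply Rmult_lt_0_compat; [auto | apply exp_pos]|].
  intros s u v Hs Hs1 Hu Hv Hz. set (z := 2 * s * u * v) in *.
  assert (Hz0 : 0 <= z) by (unfold z; repeat apply Rmult_le_pos; lra).
  assert (HS1 : 0 < bessel_series (nu + 1) z <= bessel_series (nu + 1) 1)
    by (split; [apply bessel_series_pos; lra | apply bessel_series_incr; lra]).
  assert (HS0 : 0 < bessel_series nu z <= bessel_series nu 1)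
    by (split; [apply bessel_series_pos; lra | apply bessel_series_incr; lra]).
  pose proof (pow2_ge_0 v).
  assert (Hab : Rabs (v ^ 2 * bessel_series (nu + 1) z - bessel_series nu z)
                <= M * exp (ln (1 + v ^ 2))).
  { rewrite exp_ln by lra.
    assert (v ^ 2 * bessel_series (nu + 1) z <= v ^ 2 * M) by (apply Rmult_le_compat_l; unfold M; lra).
    assert (0 <= v ^ 2 * bessel_series (nu + 1) z) by (apply Rmult_le_pos; lra).
    apply Rabs_le. unfold M in *. split; nra. }
  unfold delta_profile, profile_majorant. fold z.
  eapply Rle_trans.
  { apply Rmult_le_compat_l; [|exact Hab]. apply Rlt_le, Rmult_lt_0_compat; apply exp_pos. }
  replace (exp (profile_log_weight nu s u v) * exp (- ((1 + s ^ 2) / 2 * (u ^ 2 + v ^ 2)))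
           * (M * exp (ln (1 + v ^ 2))))
    with (M * exp (profile_log_weight nu s u v - (1 + s ^ 2) / 2 * (u ^ 2 + v ^ 2) + ln (1 + v ^ 2)))
    by (unfold Rminus; rewrite !exp_plus; ring).
  rewrite Rmult_assoc, <- exp_plus. apply Rmult_le_compat_l; [lra|]. apply exp_le_compat.
  unfold profile_log_weight.
  assert (Hls : ln s < 0) by (rewrite <- ln_1; apply ln_increasing; lra).
  assert ((nu + 3 / 2) * ln s <= 0) by (apply Rmult_le_0_l; lra).
  pose proof (mul_ln_sub_sq_le (nu + 3 / 2) u ltac:(lra) Hu).
  pose proof (mul_ln_sub_sq_le_gamma_nu nu v Hn Hv).
  pose proof (ln_1_add_sq_le v).
  assert (0 <= s ^ 2 * (u ^ 2 + v ^ 2))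
    by (apply Rmult_le_pos; [apply pow2_ge_0 | pose proof (pow2_ge_0 u); lra]).
  assert ((u - v) ^ 2 <= 2 * (u ^ 2 + v ^ 2)) by (pose proof (pow2_ge_0 (u + v)); nra).
  pose proof (pow2_ge_0 u). pose proof (pow2_ge_0 (nu + 3 / 2)). pose proof (pow2_ge_0 (nu + 1 / 2)).
  lra.
Qed.

Lemma inv_le_of_product_ge s u v : 0 < s -> s < 1 -> 0 < u -> 0 < v -> 1 <= 2 * s * u * v ->
  / v <= 2 + 4 * Rabs (u - v).
Proof.
  intros Hs Hs1 Hu Hv Hz. pose proof (Rabs_pos (u - v)).
  destruct (Rle_lt_dec (u / 2) v) as [Hc|Hc].
  - assert (2 * s * u * v <= 2 * u * v).
    { assert (0 <= (1 - s) * (2 * u * v)) by (apply Rmult_le_pos; [lra | nra]). nra. }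
    assert (1 / 2 <= v) by nra.
    assert (/ v <= 2); [|lra].
    replace 2 with (/ (1 / 2)) by field. apply Rinv_le_contravar; lra.
  - assert (/ v <= 2 * s * u) by (apply (Rmult_le_reg_r v); auto; rewrite Rinv_l; lra).
    rewrite Rabs_right by lra. nra.
Qed.

Lemma gaussian_mul_affine_le a b c : 0 <= a -> 0 <= b -> 0 <= c ->
  (a + b + c * (2 + 4 * a)) * (exp (- (a ^ 2 / 4)) * exp (- (b ^ 2 / 4)))
  <= (10 * c + 4) * exp (- (a ^ 2 / 8)).
Proof.
  intros Ha Hb Hc.
  set (EA := exp (- (a ^ 2 / 4))). set (EB := exp (- (b ^ 2 / 4))). set (EA8 := exp (- (a ^ 2 / 8))).
  assert (0 < EA) by apply exp_pos. assert (0 < EB) by apply exp_pos.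
  assert (0 < EA8) by apply exp_pos.
  assert (HEA : EA <= EA8) by (apply exp_le_compat; pose proof (pow2_ge_0 a); lra).
  assert (HEB : EB <= 1) by (rewrite <- exp_0; apply exp_le_compat; pose proof (pow2_ge_0 b); lra).
  assert (Ta : a * EA <= 2 * EA8) by now apply mul_exp_neg_sq_le_exp.
  assert (Tb : b * EB <= 2).
  { eapply Rle_trans; [now apply mul_exp_neg_sq_le_exp|].
    assert (exp (- (b ^ 2 / 8)) <= 1)
      by (rewrite <- exp_0; apply exp_le_compat; pose proof (pow2_ge_0 b); lra). lra. }
  assert (T1 : a * (EA * EB) <= 2 * EA8).
  { replace (a * (EA * EB)) with ((a * EA) * EB) by ring.
    assert (0 <= a * EA) by (apply Rmult_le_pos; lra). nra. }
  assert (T2 : b * (EA * EB) <= 2 * EA8).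
  { replace (b * (EA * EB)) with ((b * EB) * EA) by ring.
    assert (0 <= b * EB) by (apply Rmult_le_pos; lra). nra. }
  assert (T3 : EA * EB <= EA8) by nra.
  replace ((a + b + c * (2 + 4 * a)) * (EA * EB))
    with (a * (EA * EB) + b * (EA * EB) + 2 * c * (EA * EB) + 4 * c * (a * (EA * EB))) by ring.
  assert (2 * c * (EA * EB) <= 2 * c * EA8) by (apply Rmult_le_compat_l; lra).
  assert (4 * c * (a * (EA * EB)) <= 4 * c * (2 * EA8)) by (apply Rmult_le_compat_l; lra).
  lra.
Qed.

Lemma large_regime_factor_le nu s u v : -1 < nu -> 0 < s -> s < 1 -> 0 < u -> 0 < v ->
  1 <= 2 * s * u * v ->
  (Rabs (v - s * u) + (nu + 2) / v)
    * exp (- ((1 + s) ^ 2 * (u - v) ^ 2 / 4 + (1 - s) ^ 2 * (u + v) ^ 2 / 4))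
  <= (10 * (nu + 2) + 4) * exp (- ((u - v) ^ 2 / 8)).
Proof.
  intros Hn Hs Hs1 Hu Hv Hz.
  set (a := Rabs (u - v)). set (b := (1 - s) * (u + v)).
  assert (Ha : 0 <= a) by apply Rabs_pos.
  assert (Hb : 0 <= b) by (apply Rmult_le_pos; lra).
  assert (Ha2 : a ^ 2 = (u - v) ^ 2) by apply pow2_abs.
  assert (Hiv := inv_le_of_product_ge s u v Hs Hs1 Hu Hv Hz). fold a in Hiv.
  assert (Hvs : Rabs (v - s * u) <= a + b).
  { replace (v - s * u) with (- (u - v) + (1 - s) * u) by ring.
    eapply Rle_trans; [apply Rabs_triang|]. rewrite Rabs_Ropp. apply Rplus_le_compat_l.
    rewrite Rabs_right by (apply Rle_ge, Rmult_le_pos; lra). apply Rmult_le_compat_l; lra. }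
  replace (exp (- ((u - v) ^ 2 / 8))) with (exp (- (a ^ 2 / 8))) by now rewrite Ha2.
  eapply Rle_trans; [|apply (gaussian_mul_affine_le a b (nu + 2)); lra].
  apply Rmult_le_compat.
  - apply Rplus_le_le_0_compat; [apply Rabs_pos | apply Rdiv_le_0_compat; lra].
  - apply Rlt_le, exp_pos.
  - unfold Rdiv. assert ((nu + 2) * / v <= (nu + 2) * (2 + 4 * a)) by (apply Rmult_le_compat_l; lra).
    lra.
  - rewrite <- exp_plus. apply exp_le_compat. rewrite Ha2.
    replace (b ^ 2) with ((1 - s) ^ 2 * (u + v) ^ 2) by (unfold b; ring).
    pose proof (pow2_ge_0 (u - v)). assert (1 <= (1 + s) ^ 2) by nra. nra.
Qed.

(* The factor [e^z] from the asymptotics of [S_(nu+1)(z)] is absorbed by the Gaussian: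
   [(1 + s^2)(u^2 + v^2)/2 - 2suv = ((1 + s)^2 (u - v)^2 + (1 - s)^2 (u + v)^2) / 4]. *)
Lemma profile_weight_exp_eq nu s u v : 0 < s -> 0 < u -> 0 < v ->
  let z := 2 * s * u * v in
  exp (profile_log_weight nu s u v) * exp (- ((1 + s ^ 2) / 2 * (u ^ 2 + v ^ 2)))
    * exp z * Rpower z (- (nu + 1 + 1 / 2))
  = exp (- (nu + 1 / 2) * ln 2) * exp (- ln s / 2) * / v
    * exp (- ((1 + s) ^ 2 * (u - v) ^ 2 / 4 + (1 - s) ^ 2 * (u + v) ^ 2 / 4)).
Proof.
  intros Hs Hu Hv z.
  assert (Hlz : ln z = ln 2 + ln s + ln u + ln v)
    by (unfold z; rewrite !ln_mult by (repeat apply Rmult_lt_0_compat; lra); ring).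
  unfold Rpower. rewrite Hlz. replace (/ v) with (exp (- ln v)) by (rewrite exp_Ropp, exp_ln; lra).
  rewrite <- !exp_plus. f_equal. unfold profile_log_weight, z. field.
Qed.

Lemma delta_profile_le_of_bessel_bound nu M s u v : -1 < nu ->
  (forall z, 1 <= z -> bessel_series (nu + 1) z <= M * exp z * Rpower z (- (nu + 1 + 1 / 2))) ->
  0 < s -> 0 < u -> 0 < v -> 1 <= 2 * s * u * v ->
  delta_profile nu s u v
  <= M * exp (- (nu + 1 / 2) * ln 2) * exp (- ln s / 2)
     * ((Rabs (v - s * u) + (nu + 2) / v)
        * exp (- ((1 + s) ^ 2 * (u - v) ^ 2 / 4 + (1 - s) ^ 2 * (u + v) ^ 2 / 4))).
Proof.
  intros Hn HB Hs Hu Hv Hz.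
  pose proof (profile_weight_exp_eq nu s u v Hs Hu Hv) as Hid. cbv zeta in Hid.
  set (z := 2 * s * u * v) in *.
  assert (HS1 : 0 < bessel_series (nu + 1) z) by (apply bessel_series_pos; lra).
  assert (Hab : Rabs (v ^ 2 * bessel_series (nu + 1) z - bessel_series nu z)
                <= (Rabs (v ^ 2 - z / 2) + (nu + 2)) * bessel_series (nu + 1) z).
  { replace (v ^ 2 * bessel_series (nu + 1) z - bessel_series nu z)
      with ((v ^ 2 - z / 2) * bessel_series (nu + 1) z
            + (z / 2 * bessel_series (nu + 1) z - bessel_series nu z)) by ring.
    eapply Rle_trans; [apply Rabs_triang|].
    rewrite Rabs_mult, (Rabs_right (bessel_series (nu + 1) z)) by lra.
    pose proof (bessel_series_shift_diff_le nu z Hn ltac:(lra)). lra. }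
  assert (Hw : (Rabs (v ^ 2 - z / 2) + (nu + 2)) * / v = Rabs (v - s * u) + (nu + 2) / v).
  { unfold z. replace (v ^ 2 - 2 * s * u * v / 2) with (v * (v - s * u)) by field.
    rewrite Rabs_mult, (Rabs_right v) by lra. field. lra. }
  set (W := exp (profile_log_weight nu s u v) * exp (- ((1 + s ^ 2) / 2 * (u ^ 2 + v ^ 2)))).
  assert (HW : 0 < W) by (apply Rmult_lt_0_compat; apply exp_pos).
  unfold delta_profile. fold z W.
  apply Rle_trans with (W * ((Rabs (v ^ 2 - z / 2) + (nu + 2))
                             * (M * exp z * Rpower z (- (nu + 1 + 1 / 2))))).
  { apply Rmult_le_compat_l; [lra|]. eapply Rle_trans; [exact Hab|].
    apply Rmult_le_compat_l; [pose proof (Rabs_pos (v ^ 2 - z / 2)); lra | apply HB; lra]. }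
  right. rewrite <- Hw.
  transitivity (M * (Rabs (v ^ 2 - z / 2) + (nu + 2)) * (W * exp z * Rpower z (- (nu + 1 + 1 / 2))));
    [ring|].
  unfold W. rewrite Hid. ring.
Qed.

Lemma delta_profile_le_large nu : -1 < nu -> exists K, 0 < K /\
  forall s u v, 0 < s -> s < 1 -> 0 < u -> 0 < v -> 1 <= 2 * s * u * v ->
    delta_profile nu s u v <= K * profile_majorant nu s u v.
Proof.
  intros Hn. destruct (bessel_series_le_exp (nu + 1) ltac:(lra)) as [M [HM HB]].
  set (C := M * exp (- (nu + 1 / 2) * ln 2)).
  assert (HC : 0 < C) by (apply Rmult_lt_0_compat; [auto | apply exp_pos]).
  exists (C * (10 * (nu + 2) + 4)). split; [apply Rmult_lt_0_compat; lra|].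
  intros s u v Hs Hs1 Hu Hv Hz.
  eapply Rle_trans; [now apply (delta_profile_le_of_bessel_bound nu M)|]. fold C.
  pose proof (exp_pos (- ln s / 2)).
  eapply Rle_trans.
  { apply Rmult_le_compat_l; [apply Rlt_le, Rmult_lt_0_compat; auto|].
    exact (large_regime_factor_le nu s u v Hn Hs Hs1 Hu Hv Hz). }
  assert (0 <= gamma_nu nu * ln (1 + / v)).
  { apply Rmult_le_pos; [apply gamma_nu_nonneg | apply ln_nonneg].
    pose proof (Rinv_0_lt_compat v Hv). lra. }
  assert (exp (- ln s / 2) * exp (- ((u - v) ^ 2 / 8)) <= profile_majorant nu s u v).
  { unfold profile_majorant. rewrite <- exp_plus. apply exp_le_compat.
    pose proof (pow2_ge_0 (u - v)). lra. }
  replace (C * exp (- ln s / 2) * ((10 * (nu + 2) + 4) * exp (- ((u - v) ^ 2 / 8))))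
    with (C * (10 * (nu + 2) + 4) * (exp (- ln s / 2) * exp (- ((u - v) ^ 2 / 8)))) by ring.
  apply Rmult_le_compat_l; [apply Rlt_le, Rmult_lt_0_compat|]; lra.
Qed.

Lemma delta_profile_le nu : -1 < nu -> exists K, 0 < K /\
  forall s u v, 0 < s -> s < 1 -> 0 < u -> 0 < v ->
    delta_profile nu s u v <= K * profile_majorant nu s u v.
Proof.
  intros Hn.
  destruct (delta_profile_le_small nu Hn) as [K1 [HK1 H1]].
  destruct (delta_profile_le_large nu Hn) as [K2 [HK2 H2]].
  exists (K1 + K2). split; [lra|]. intros s u v Hs Hs1 Hu Hv.
  assert (0 < profile_majorant nu s u v) by apply exp_pos.
  destruct (Rle_lt_dec (2 * s * u * v) 1) as [Hz|Hz].
  - specialize (H1 s u v Hs Hs1 Hu Hv Hz). nra.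
  - specialize (H2 s u v Hs Hs1 Hu Hv ltac:(lra)). nra.
Qed.

(** * Back to the original variables *)

Lemma exp_neg_2t_sq t : exp (- (2 * t)) ^ 2 = exp (- (4 * t)).
Proof. simpl. rewrite Rmult_1_r, <- exp_plus. f_equal. ring. Qed.

Lemma heat_prefactor_le t : 0 < t ->
  2 * exp (- (2 * t)) ^ 2 / (1 - exp (- (2 * t)) ^ 2) * exp t <= 2 / t.
Proof.
  intros Ht. rewrite exp_neg_2t_sq.
  assert (Hexp_le : forall a, exp (- a) * (1 + a) <= 1).
  { intros a. pose proof (exp_ineq1_le a). pose proof (exp_pos (- a)).
    replace 1 with (exp (- a) * exp a) at 2 by (rewrite <- exp_plus, Rplus_opp_l; apply exp_0).
    apply Rmult_le_compat_l; lra. }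
  pose proof (Hexp_le (3 * t)).
  assert (H43 : exp (- (4 * t)) <= exp (- (3 * t))) by (apply exp_le_compat; lra).
  assert (Hd : exp (- (4 * t)) < 1) by (rewrite <- exp_0; apply exp_increasing; lra).
  apply (Rmult_le_reg_r (t * (1 - exp (- (4 * t))))); [apply Rmult_lt_0_compat; lra|].
  replace (2 * exp (- (4 * t)) / (1 - exp (- (4 * t))) * exp t * (t * (1 - exp (- (4 * t)))))
    with (2 * t * (exp (- (4 * t)) * exp t)) by (field; lra).
  replace (exp (- (4 * t)) * exp t) with (exp (- (3 * t))) by (rewrite <- exp_plus; f_equal; ring).
  replace (2 / t * (t * (1 - exp (- (4 * t))))) with (2 * (1 - exp (- (4 * t)))) by (field; lra).
  nra.
Qed.

Lemma sq_sub_div_sqrt_ge t d x y : 0 < t -> 0 < d -> d <= 4 * t ->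
  (x - y) ^ 2 / (64 * t) <= (x / sqrt d - y / sqrt d) ^ 2 / 16.
Proof.
  intros Ht Hd Hd4.
  assert (Hsd : 0 < sqrt d) by (apply sqrt_lt_R0; lra).
  replace ((x / sqrt d - y / sqrt d) ^ 2) with ((x - y) ^ 2 / (sqrt d * sqrt d)) by (field; lra).
  rewrite sqrt_sqrt by lra.
  replace ((x - y) ^ 2 / d / 16) with ((x - y) ^ 2 / (16 * d)) by (field; lra).
  unfold Rdiv. apply Rmult_le_compat_l; [apply pow2_ge_0|]. apply Rinv_le_contravar; lra.
Qed.

Lemma mul_ln_inv_div_sqrt_le g t d y : 0 <= g <= 1 -> 0 < t -> 0 < d -> d <= 4 * t -> 0 < y ->
  g * ln (1 + / (y / sqrt d)) <= ln 2 + g * ln (1 + sqrt t / y).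
Proof.
  intros Hg Ht Hd Hd4 Hy.
  assert (Hsd : 0 < sqrt d) by (apply sqrt_lt_R0; lra).
  assert (Hst : sqrt d <= 2 * sqrt t).
  { replace (2 * sqrt t) with (sqrt (4 * t)); [apply sqrt_le_1_alt; lra|].
    rewrite sqrt_mult by lra. replace 4 with (2 * 2) by ring. rewrite sqrt_square; lra. }
  replace (/ (y / sqrt d)) with (sqrt d / y) by (field; lra).
  assert (H0 : 0 <= sqrt t / y) by (apply Rdiv_le_0_compat; [apply sqrt_pos | lra]).
  assert (Hln : ln (1 + sqrt d / y) <= ln 2 + ln (1 + sqrt t / y)).
  { rewrite <- ln_mult by lra. apply ln_le.
    - assert (0 < sqrt d / y) by (apply Rdiv_lt_0_compat; lra). lra.
    - assert (sqrt d / y <= 2 * (sqrt t / y)); [|lra].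
      unfold Rdiv. rewrite <- Rmult_assoc.
      apply Rmult_le_compat_r; [apply Rlt_le, Rinv_0_lt_compat|]; lra. }
  assert (0 <= ln (1 + sqrt t / y)) by (apply ln_nonneg; lra).
  assert (0 < ln 2) by (rewrite <- ln_1; apply ln_increasing; lra).
  assert (g * ln (1 + sqrt d / y) <= g * (ln 2 + ln (1 + sqrt t / y))) by (apply Rmult_le_compat_l; lra).
  nra.
Qed.

Lemma profile_majorant_rescale_le nu t x y : -1 < nu -> 0 < t -> 0 < x -> 0 < y ->
  let s := exp (- (2 * t)) in
  profile_majorant nu s (x / sqrt (1 - s ^ 2)) (y / sqrt (1 - s ^ 2))
  <= 2 * exp t * exp (- ((x - y) ^ 2 / (64 * t))) * Rpower (1 + sqrt t / y) (gamma_nu nu).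
Proof.
  intros Hn Ht Hx Hy s.
  assert (Hs2 : s ^ 2 = exp (- (4 * t))) by apply exp_neg_2t_sq.
  assert (Hd : 0 < 1 - s ^ 2) by (rewrite Hs2, <- exp_0 at 1; apply Rlt_Rminus, exp_increasing; lra).
  assert (Hd4 : 1 - s ^ 2 <= 4 * t) by (rewrite Hs2; pose proof (exp_ineq1_le (- (4 * t))); lra).
  pose proof (sq_sub_div_sqrt_ge t (1 - s ^ 2) x y Ht Hd Hd4).
  pose proof (mul_ln_inv_div_sqrt_le (gamma_nu nu) t (1 - s ^ 2) y
                (conj (gamma_nu_nonneg nu) (gamma_nu_le_1 nu Hn)) Ht Hd Hd4 Hy).
  unfold profile_majorant, Rpower. replace (- ln s / 2) with t by (unfold s; rewrite ln_exp; field).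
  rewrite <- (exp_ln 2) at 1 by lra. rewrite <- !exp_plus. apply exp_le_compat. lra.
Qed.

Theorem proposition3p3 (nu : R) (hnu : -1 < nu) :
  exists C c : R, 0 < C /\ 0 < c /\
    forall t x y : R, 0 < t -> 0 < x -> 0 < y ->
      Rabs (delta_kernel nu t x y)
        <= C / t * exp (- ((x - y) ^ 2 / (c * t)))
           * Rpower (1 + sqrt t / y) (gamma_nu nu).
Proof.
  destruct (delta_profile_le nu hnu) as [K [HK Hprofile]].
  exists (4 * K), 64. split; [lra|]. split; [lra|].
  intros t x y Ht Hx Hy.
  pose proof (delta_kernel_abs_eq nu t x y hnu Ht Hx Hy) as Heq.
  pose proof (profile_majorant_rescale_le nu t x y hnu Ht Hx Hy) as Hmaj.
  pose proof (heat_prefactor_le t Ht) as Hpre.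
  cbv zeta in Heq, Hmaj. rewrite Heq.
  set (s := exp (- (2 * t))) in *.
  assert (Hs : 0 < s < 1)
    by (split; [apply exp_pos | unfold s; rewrite <- exp_0; apply exp_increasing; lra]).
  assert (Hd : 0 < 1 - s ^ 2) by (assert (s ^ 2 < 1) by (simpl; nra); lra).
  set (u := x / sqrt (1 - s ^ 2)) in *. set (v := y / sqrt (1 - s ^ 2)) in *.
  assert (Hsd : 0 < sqrt (1 - s ^ 2)) by (apply sqrt_lt_R0; lra).
  specialize (Hprofile s u v ltac:(lra) ltac:(lra)
                (Rdiv_lt_0_compat _ _ Hx Hsd) (Rdiv_lt_0_compat _ _ Hy Hsd)).
  set (G := exp (- ((x - y) ^ 2 / (64 * t))) * Rpower (1 + sqrt t / y) (gamma_nu nu)) in *.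
  assert (HG : 0 <= G) by (unfold G, Rpower; apply Rlt_le, Rmult_lt_0_compat; apply exp_pos).
  assert (Hpos : 0 < 2 * s ^ 2 / (1 - s ^ 2))
    by (apply Rdiv_lt_0_compat; [apply Rmult_lt_0_compat; [lra | apply pow_lt] |]; lra).
  apply Rle_trans with (2 * s ^ 2 / (1 - s ^ 2) * (K * (2 * exp t * G))).
  { apply Rmult_le_compat_l; [lra|]. eapply Rle_trans; [exact Hprofile|].
    apply Rmult_le_compat_l; [lra|]. unfold G. rewrite <- Rmult_assoc. exact Hmaj. }
  replace (2 * s ^ 2 / (1 - s ^ 2) * (K * (2 * exp t * G)))
    with ((2 * s ^ 2 / (1 - s ^ 2) * exp t) * (2 * K * G)) by ring.
  replace (4 * K / t * exp (- ((x - y) ^ 2 / (64 * t))) * Rpower (1 + sqrt t / y) (gamma_nu nu))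
    with (2 / t * (2 * K * G)) by (unfold G; field; lra).
  apply Rmult_le_compat_r; [nra | exact Hpre].
Qed.
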